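(* Let $(\mathbf{L},\mathbf{R})\in\mathcal{P}_{\mathsf N}$ be superbalanced and suppose it admits a contraction map. Then for every $i\in[\mathsf N+1]$, the null reduction of $(\mathbf{L},\mathbf{R})$ on $i$ admits a contraction map (when the null reduction is nonempty, i.e. row $i$ of $\mathbf{L}$ is nonzero; if it is empty the statement is trivial).
   Context: $\mathcal{P}_{\mathsf N}$ denotes the set of pairs $(\mathbf{L},\mathbf{R})$ of $(0,1)$-matrices, $\mathbf{L}$ of size $(\mathsf N+1)\times m_L$ and $\mathbf{R}$ of size $(\mathsf N+1)\times m_R$, such that there is an index $p\in[\mathsf N+1]$ (the purifier) for which row $p$ of $\mathbf{L}$ and row $p$ of $\mathbf{R}$ are both zero. $\mathbf{A}_{(i)}$ denotes the $i$-th row of a matrix $\mathbf{A}$; $|v|=\sum_k|v_k|$; $\cdot$ is the dot product; for bit strings $x,x'$ of equal length, $|x-x'|$ is their Hamming distance. A contraction map for $(\mathbf{L},\mathbf{R})$ is a map $f:\{0,1\}^{m_L}\to\{0,1\}^{m_R}$ such that (1) $f(\mathbf{L}_{(i)})=\mathbf{R}_{(i)}$ for all $i\in[\mathsf N+1]$, and (2) $|x-x'|\ge|f(x)-f(x')|$ for all $x,x'\in\{0,1\}^{m_L}$. (The existence of a contraction map is taken as the criterion for the associated entropy inequality to be a holographic entropy inequality.) The pair is superbalanced if $\mathbf{L}_{(i)}\cdot\mathbf{L}_{(j)}=\mathbf{R}_{(i)}\cdot\mathbf{R}_{(j)}$ for all $i,j\in[\mathsf N+1]$. The null reduction of $(\mathbf{L},\mathbf{R})$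 on $i$ is the pair $(\mathbf{L}',\mathbf{R}')$ where $\mathbf{L}'$ consists of the columns of $\mathbf{L}$ having a $1$ in row $i$ and $\mathbf{R}'$ consists of the columns of $\mathbf{R}$ having a $1$ in row $i$. *)

From mathcomp Require Import all_boot all_algebra.
Set Implicit Arguments. Unset Strict Implicit. Unset Printing Implicit Defensive.

Definition bits (m : nat) := 'rV[bool]_m.

Definition hamming (m : nat) (x y : bits m) : nat :=
  #|[set k : 'I_m | x ord0 k != y ord0 k]|.

Definition dotb (m : nat) (x y : bits m) : nat :=
  #|[set k : 'I_m | x ord0 k && y ord0 k]|.

(* (L,R) in P_N : some purifier row p is zero in both L and R *)
Definition in_PN (N mL mR : nat) (L : 'M[bool]_(N.+1, mL)) (R : 'M[bool]_(N.+1, mR)) : Prop :=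
  exists p : 'I_N.+1, (forall k, L p k = false) /\ (forall k, R p k = false).

Definition is_contraction (N mL mR : nat) (L : 'M[bool]_(N.+1, mL)) (R : 'M[bool]_(N.+1, mR))
  (f : bits mL -> bits mR) : Prop :=
  (forall i : 'I_N.+1, f (row i L) = row i R) /\
  (forall x x' : bits mL, hamming (f x) (f x') <= hamming x x').

Definition has_contraction (N mL mR : nat) (L : 'M[bool]_(N.+1, mL)) (R : 'M[bool]_(N.+1, mR)) : Prop :=
  exists f : bits mL -> bits mR, is_contraction L R f.

Definition superbalanced (N mL mR : nat) (L : 'M[bool]_(N.+1, mL)) (R : 'M[bool]_(N.+1, mR)) : Prop :=
  forall i j : 'I_N.+1, dotb (row i L) (row j L) = dotb (row i R) (row j R).

Definition col_support (N m : nat) (A : 'M[bool]_(N.+1, m)) (i : 'I_N.+1) : {set 'I_m} :=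
  [set k | A i k].

Definition null_red (N m : nat) (A : 'M[bool]_(N.+1, m)) (i : 'I_N.+1)
  : 'M[bool]_(N.+1, #|col_support A i|) :=
  \matrix_(r < N.+1, c < #|col_support A i|) A r (enum_val c).

From mathcomp Require Import all_boot all_algebra.
From mathcomp Require Import zify.
Set Implicit Arguments. Unset Strict Implicit. Unset Printing Implicit Defensive.

(** Read bit strings as subsets of the columns. A contraction [f] with
    [f 0 = 0] (the purifier row) and [f a = b], [|a| = |b|], maps every
    [x ⊆ a] to some [f x ⊆ b] with [|f x| = |x|]: indeed [|f x| <= |x|], and
    [|f x| + |b| - 2 |f x ∩ b| = d(f x, b) <= d(x, a) = |a| - |x|] forces
    [|f x ∩ b| = |f x| = |x|]. Superbalance gives [|L_i| = |R_i|], so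
    applying this to [L_i ∩ L_j] inside both [L_i] and [L_j] yields
    [f (L_i ∩ L_j) ⊆ R_i ∩ R_j], with equality because
    [|L_i ∩ L_j| = |R_i ∩ R_j|]. The rows of the null reduction on [i] are
    the rows [L_j ∩ L_i] restricted to the columns of [L_i], so "extend by
    zeros, apply [f], restrict to the columns of [R_i]" is a contraction
    for it. *)

Definition supp m (x : bits m) : {set 'I_m} := [set k | x ord0 k].

Definition meet_bits m (x y : bits m) : bits m := (\row_k (x ord0 k && y ord0 k))%R.

Section BitStrings.

Variable m : nat.
Implicit Types x y : bits m.

Lemma supp_inj : injective (@supp m).
Proof.
by move=> x y /setP xy; apply/rowP => k; have := xy k; rewrite !inE.
Qed.

Lemma supp0 : supp (0%R : bits m) = set0.
Proof. by apply/setP => k; rewrite !inE mxE. Qed.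

Lemma supp_meet x y : supp (meet_bits x y) = supp x :&: supp y.
Proof. by apply/setP => k; rewrite !inE mxE. Qed.

Lemma dotbE x y : dotb x y = #|supp x :&: supp y|.
Proof. by apply: eq_card => k; rewrite !inE. Qed.

Lemma dotb_self x : dotb x x = #|supp x|.
Proof. by rewrite dotbE setIid. Qed.

Lemma card_set_sum (P : pred 'I_m) : #|[set k | P k]| = \sum_k (P k : nat).
Proof. by rewrite -sum1dep_card big_mkcond; apply: eq_bigr => k _; case: (P k). Qed.

Lemma hamming_dotb x y : hamming x y + 2 * dotb x y = #|supp x| + #|supp y|.
Proof.
rewrite /hamming /dotb /supp !card_set_sum big_distrr -!big_split.
by apply: eq_bigr => k _ /=; case: (x ord0 k); case: (y ord0 k).
Qed.

Lemma hamming0 x : hamming x 0%R = #|supp x|.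
Proof. by have := hamming_dotb x 0%R; rewrite dotbE supp0 setI0 cards0; lia. Qed.

End BitStrings.

Section NonexpansiveMaps.

Variables m n : nat.
Variable f : bits m -> bits n.
Hypothesis f_nonexp : forall x x', hamming (f x) (f x') <= hamming x x'.
Hypothesis f0 : f 0%R = 0%R.

Lemma card_supp_nonexp x : #|supp (f x)| <= #|supp x|.
Proof. by rewrite -hamming0 -(hamming0 x) -{1}f0 f_nonexp. Qed.

Lemma supp_nonexp_sub a b x :
  f a = b -> #|supp a| = #|supp b| -> supp x \subset supp a ->
  supp (f x) \subset supp b /\ #|supp (f x)| = #|supp x|.
Proof.
move=> fab card_ab /setIidPl xa.
have d_xa := hamming_dotb x a; rewrite dotbE xa in d_xa.
have d_fx_b := hamming_dotb (f x) b; rewrite dotbE in d_fx_b.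
have fx_b : hamming (f x) b <= hamming x a by rewrite -fab.
have meet_le : #|supp (f x) :&: supp b| <= #|supp (f x)| by rewrite subset_leq_card ?subsetIl.
have fx_le := card_supp_nonexp x.
have card_meet : #|supp (f x) :&: supp b| = #|supp (f x)| by lia.
split; last by lia.
by apply/setIidPl/eqP; rewrite eqEcard subsetIl card_meet leqnn.
Qed.

Lemma nonexp_meet ai aj bi bj :
  f ai = bi -> f aj = bj ->
  #|supp ai| = #|supp bi| -> #|supp aj| = #|supp bj| ->
  dotb ai aj = dotb bi bj ->
  f (meet_bits ai aj) = meet_bits bi bj.
Proof.
move=> fi fj card_i card_j dot_ij; apply: supp_inj.
have y_i : supp (meet_bits ai aj) \subset supp ai by rewrite supp_meet subsetIl.
have y_j : supp (meet_bits ai aj) \subset supp aj by rewrite supp_meet subsetIr.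
have [sub_i card_f] := supp_nonexp_sub fi card_i y_i.
have [sub_j _] := supp_nonexp_sub fj card_j y_j.
apply/eqP; rewrite eqEcard !supp_meet subsetI sub_i sub_j /=.
by rewrite card_f supp_meet -!dotbE dot_ij.
Qed.

End NonexpansiveMaps.

Section Restriction.

Variables (m : nat) (S : {set 'I_m}).

Definition restr (z : bits m) : bits #|S| := (\row_c z ord0 (enum_val c))%R.

Definition extend (x : bits #|S|) : bits m :=
  (\row_k [exists c, (enum_val c == k) && x ord0 c])%R.

Lemma extend_enum_val x c : extend x ord0 (enum_val c) = x ord0 c.
Proof.
rewrite mxE; apply/existsP/idP => [[c' /andP[/eqP/enum_val_inj -> //]] | xc].
by exists c; rewrite eqxx.
Qed.

Lemma extend_notin x k : k \notin S -> extend x ord0 k = false.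
Proof.
by apply: contraNF; rewrite mxE => /existsP[c /andP[/eqP <- _]]; apply: enum_valP.
Qed.

Lemma extend_restr z : extend (restr z) = (\row_k (z ord0 k && (k \in S)))%R.
Proof.
apply/rowP => k; rewrite [RHS]mxE.
have [kS | kNS] := boolP (k \in S).
  by rewrite -(enum_rankK_in kS kS) extend_enum_val mxE andbT.
by rewrite andbF extend_notin.
Qed.

Lemma hamming_extend x x' : hamming (extend x) (extend x') <= hamming x x'.
Proof.
apply: leq_trans (leq_imset_card (@enum_val _ (mem S)) _).
apply: subset_leq_card; apply/subsetP => k; rewrite inE => x_x'.
have kS : k \in S by apply: contraR x_x' => kNS; rewrite !extend_notin.
rewrite -(enum_rankK_in kS kS) in x_x' *.
by apply: imset_f; rewrite inE -!extend_enum_val.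
Qed.

Lemma hamming_restr z z' : hamming (restr z) (restr z') <= hamming z z'.
Proof.
rewrite /hamming -(card_imset _ (@enum_val_inj _ (mem S))).
by apply: subset_leq_card; apply/subsetP => k /imsetP[c]; rewrite !inE !mxE => ? ->.
Qed.

Lemma restr_meet z w : {subset S <= supp w} -> restr (meet_bits z w) = restr z.
Proof.
move=> Sw; apply/rowP => c; rewrite !mxE.
by have := Sw _ (enum_valP c); rewrite inE => ->; rewrite andbT.
Qed.

End Restriction.

Arguments extend {m} S x.

Lemma null_red_row N m (A : 'M[bool]_(N.+1, m)) i j :
  row j (null_red A i) = restr (col_support A i) (row j A).
Proof. by apply/rowP => c; rewrite !mxE. Qed.

Theorem theorem1 (N mL mR : nat) (L : 'M[bool]_(N.+1, mL)) (R : 'M[bool]_(N.+1, mR)) :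
  in_PN L R -> superbalanced L R -> has_contraction L R ->
  forall i : 'I_N.+1, has_contraction (null_red L i) (null_red R i).
Proof.
move=> [p [Lp Rp]] SB [f [f_rows f_nonexp]] i.
have row0 m (A : 'M[bool]_(N.+1, m)) : (forall k, A p k = false) -> row p A = 0%R.
  by move=> Ap; apply/rowP => k; rewrite !mxE.
have f0 : f 0%R = 0%R by rewrite -(row0 _ _ Lp) -(row0 _ _ Rp) f_rows.
have card_rows k : #|supp (row k L)| = #|supp (row k R)| by rewrite -!dotb_self SB.
exists (restr (col_support R i) \o f \o extend (col_support L i)); split => [j | x x'] /=.
- have -> : extend (col_support L i) (row j (null_red L i)) = meet_bits (row j L) (row i L).
    by rewrite null_red_row extend_restr; apply/rowP => k; rewrite !mxE inE.
  rewrite (nonexp_meet f_nonexp f0 (f_rows j) (f_rows i)) ?card_rows ?SB //.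
  by rewrite null_red_row restr_meet // => k; rewrite !inE mxE.
- apply: leq_trans (hamming_restr _ _ _) _.
  by apply: leq_trans (f_nonexp _ _) _; apply: hamming_extend.
Qed.
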